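(* Let $0\to K_i\to L_i\to M_i\to 0$ be a family of admissible short exact sequences in an exact category $\mathsf K$. Assume that the products $\prod_iK_i$, $\prod_iL_i$, $\prod_iM_i$ exist in $\mathsf K$, and that there exists an admissible epimorphism $q\colon A\to\prod_iM_i$ where $A\in\mathsf K$ satisfies $\mathrm{Ext}^1_{\mathsf K}(A,K_i)=0$ for all $i$. Then $0\to\prod_iK_i\to\prod_iL_i\to\prod_iM_i\to0$ (with the induced morphisms) is an admissible short exact sequence in $\mathsf K$.
   Context: $\mathsf K$ is an exact category in Quillen's sense and $\mathrm{Ext}^1_{\mathsf K}$ denotes Yoneda Ext in $\mathsf K$. Products are not assumed to be exact. *)

From Stdlib Require Import Relations.Relation_Operators.
From HB Require Import structures.
From mathcomp Require Import all_boot all_algebra.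
Set Implicit Arguments. Unset Strict Implicit. Unset Printing Implicit Defensive.
Import GRing.Theory.
Local Open Scope ring_scope.

Record AddCat := {
  obj : Type;
  cHom : obj -> obj -> zmodType;
  cmp : forall A B C : obj, cHom B C -> cHom A B -> cHom A C;
  idm : forall A : obj, cHom A A;
  compA : forall A B C D (h : cHom C D) (g : cHom B C) (f : cHom A B),
      cmp h (cmp g f) = cmp (cmp h g) f;
  comp1m : forall A B (f : cHom A B), cmp (idm B) f = f;
  compm1 : forall A B (f : cHom A B), cmp f (idm A) = f;
  compDl : forall A B C (g1 g2 : cHom B C) (f : cHom A B),
      cmp (g1 + g2) f = cmp g1 f + cmp g2 f;
  compDr : forall A B C (g : cHom B C) (f1 f2 : cHom A B),
      cmp g (f1 + f2) = cmp g f1 + cmp g f2;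
  zobj : obj;
  zobj_id : idm zobj = 0;
  biprod : obj -> obj -> obj;
  bi_inl : forall A B, cHom A (biprod A B);
  bi_inr : forall A B, cHom B (biprod A B);
  bi_pr1 : forall A B, cHom (biprod A B) A;
  bi_pr2 : forall A B, cHom (biprod A B) B;
  bi_pr1_inl : forall A B, cmp (bi_pr1 A B) (bi_inl A B) = idm A;
  bi_pr2_inr : forall A B, cmp (bi_pr2 A B) (bi_inr A B) = idm B;
  bi_pr1_inr : forall A B, cmp (bi_pr1 A B) (bi_inr A B) = 0;
  bi_pr2_inl : forall A B, cmp (bi_pr2 A B) (bi_inl A B) = 0;
  bi_sum : forall A B, cmp (bi_inl A B) (bi_pr1 A B)
                       + cmp (bi_inr A B) (bi_pr2 A B) = idm (biprod A B)
}.

Arguments cHom : clear implicits.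
Arguments cmp {_ _ _ _}.
Arguments idm {_}.
Notation "g \o' f" := (cmp g f) (at level 50, left associativity).

Section Notions.
Variable C : AddCat.
Implicit Types X Y : obj C.

Definition is_kernel K L M (i : cHom C K L) (p : cHom C L M) : Prop :=
  p \o' i = 0 /\
  forall X (g : cHom C X L), p \o' g = 0 -> exists! h : cHom C X K, i \o' h = g.

Definition is_cokernel K L M (i : cHom C K L) (p : cHom C L M) : Prop :=
  p \o' i = 0 /\
  forall X (g : cHom C L X), g \o' i = 0 -> exists! h : cHom C M X, h \o' p = g.

Definition is_iso X Y (f : cHom C X Y) : Prop :=
  exists g : cHom C Y X, g \o' f = idm X /\ f \o' g = idm Y.

Definition is_pushout A B A' B' (i : cHom C A B) (f : cHom C A A')
    (f' : cHom C B B') (i' : cHom C A' B') : Prop :=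
  f' \o' i = i' \o' f /\
  forall X (u : cHom C B X) (v : cHom C A' X), u \o' i = v \o' f ->
    exists! w : cHom C B' X, w \o' f' = u /\ w \o' i' = v.

Definition is_pullback A B A' B' (p : cHom C B A) (f : cHom C A' A)
    (f' : cHom C B' B) (p' : cHom C B' A') : Prop :=
  p \o' f' = f \o' p' /\
  forall X (u : cHom C X B) (v : cHom C X A'), p \o' u = f \o' v ->
    exists! w : cHom C X B', f' \o' w = u /\ p' \o' w = v.

Definition is_product (I : Type) (F : I -> obj C) (P : obj C)
    (pr : forall j, cHom C P (F j)) : Prop :=
  forall X (g : forall j, cHom C X (F j)),
    exists! h : cHom C X P, forall j, pr j \o' h = g j.
End Notions.

Record ExactCat := {
  ecat :> AddCat;
  conf : forall K L M : obj ecat, cHom ecat K L -> cHom ecat L M -> Prop;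
  conf_kc : forall K L M (i : cHom ecat K L) (p : cHom ecat L M),
      conf i p -> is_kernel i p /\ is_cokernel i p;
  conf_iso : forall K L M K' L' M' (i : cHom ecat K L) (p : cHom ecat L M)
      (i' : cHom ecat K' L') (p' : cHom ecat L' M')
      (a : cHom ecat K' K) (b : cHom ecat L' L) (c : cHom ecat M' M),
      conf i p -> is_iso a -> is_iso b -> is_iso c ->
      b \o' i' = i \o' a -> c \o' p' = p \o' b -> conf i' p';
  conf_id_mono : forall A, exists M (p : cHom ecat A M), conf (idm A) p;
  conf_id_epi : forall A, exists K (i : cHom ecat K A), conf i (idm A);
  conf_comp_mono : forall A B D (i : cHom ecat A B) (j : cHom ecat B D),
      (exists M (p : cHom ecat B M), conf i p) ->
      (exists M (p : cHom ecat D M), conf j p) ->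
      exists M (p : cHom ecat D M), conf (j \o' i) p;
  conf_comp_epi : forall A B D (p : cHom ecat A B) (q : cHom ecat B D),
      (exists K (i : cHom ecat K A), conf i p) ->
      (exists K (i : cHom ecat K B), conf i q) ->
      exists K (i : cHom ecat K A), conf i (q \o' p);
  conf_pushout : forall A B A' (i : cHom ecat A B) (f : cHom ecat A A'),
      (exists M (p : cHom ecat B M), conf i p) ->
      exists B' (f' : cHom ecat B B') (i' : cHom ecat A' B'),
        is_pushout i f f' i' /\ exists M (p : cHom ecat B' M), conf i' p;
  conf_pullback : forall A B A' (p : cHom ecat B A) (f : cHom ecat A' A),
      (exists K (i : cHom ecat K B), conf i p) ->
      exists B' (f' : cHom ecat B' B) (p' : cHom ecat B' A'),
        is_pullback p f f' p' /\ exists K (i : cHom ecat K B'), conf i p'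
}.

Section ExactNotions.
Variable E : ExactCat.

Definition adm_epi B A (p : cHom E B A) : Prop :=
  exists K (i : cHom E K B), conf i p.

Record extension (K A : obj E) := Ext {
  ext_obj : obj E; ext_i : cHom E K ext_obj; ext_p : cHom E ext_obj A }.

Definition ext_mor (K A : obj E) (e1 e2 : extension K A) : Prop :=
  conf (ext_i e1) (ext_p e1) /\ conf (ext_i e2) (ext_p e2) /\
  exists phi : cHom E (ext_obj e1) (ext_obj e2),
    phi \o' ext_i e1 = ext_i e2 /\ ext_p e2 \o' phi = ext_p e1.

Definition yoneda_equiv (K A : obj E) : extension K A -> extension K A -> Prop :=
  clos_refl_sym_trans (extension K A) (@ext_mor K A).

(** the split extension K -> K (+) A -> A, the zero of Yoneda Ext^1 *)
Definition split_ext (K A : obj E) : extension K A :=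
  @Ext K A (biprod K A) (bi_inl K A) (bi_pr2 K A).

Definition Ext1_zero (A K : obj E) : Prop :=
  forall e : extension K A, conf (ext_i e) (ext_p e) ->
    yoneda_equiv e (split_ext K A).
End ExactNotions.

From Pilot Require Import Defs.
From mathcomp Require Import all_boot all_algebra.
From Stdlib Require Import ClassicalEpsilon ChoiceFacts.
Set Implicit Arguments. Unset Strict Implicit.
Import GRing.Theory.
Local Open Scope ring_scope.
Local Notation compA := Defs.compA.

(* Because Ext^1(A, K_j) = 0, the pullback of K_j >-> L_j ->> M_j along any
   u : A -> M_j splits, so u lifts to L_j; hence q lifts to s : A -> prod L_j
   with g \o s = q.  Kernels commute with products, so f is a kernel of g.
   Finally, a morphism g with a kernel f such that g \o s is an admissible
   epimorphism is itself an admissible epimorphism with kernel f (Buehler's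
   "obscure axiom"): pushing the conflation ker q >-> A ->> prod M along the
   induced ker q -> prod K gives a conflation prod K >-> P ->> prod M, and the
   comparison map P -> prod L is an isomorphism. *)

Section AdditiveCategory.
Variable C : AddCat.

Lemma compBl (X Y Z : obj C) (g1 g2 : cHom C Y Z) (f : cHom C X Y) :
  (g1 - g2) \o' f = (g1 \o' f) - (g2 \o' f).
Proof. by apply/eqP; rewrite eq_sym subr_eq -compDl subrK. Qed.

Lemma compBr (X Y Z : obj C) (g : cHom C Y Z) (f1 f2 : cHom C X Y) :
  g \o' (f1 - f2) = (g \o' f1) - (g \o' f2).
Proof. by apply/eqP; rewrite eq_sym subr_eq -compDr subrK. Qed.

Lemma comp0m (X Y Z : obj C) (f : cHom C X Y) : (0 : cHom C Y Z) \o' f = 0.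
Proof. by rewrite -(subr0 (0 : cHom C Y Z)) compBl subrr. Qed.

Lemma compm0 (X Y Z : obj C) (g : cHom C Y Z) : g \o' (0 : cHom C X Y) = 0.
Proof. by rewrite -(subr0 (0 : cHom C X Y)) compBr subrr. Qed.

Definition monic (X Y : obj C) (h : cHom C X Y) : Prop :=
  forall Z (a b : cHom C Z X), h \o' a = h \o' b -> a = b.

Definition epic (X Y : obj C) (h : cHom C X Y) : Prop :=
  forall Z (a b : cHom C Y Z), a \o' h = b \o' h -> a = b.

Lemma monicP (X Y : obj C) (h : cHom C X Y) :
  (forall Z (x : cHom C Z X), h \o' x = 0 -> x = 0) -> monic h.
Proof.
move=> h0 Z a b hab; apply/eqP; rewrite -subr_eq0; apply/eqP/h0.
by rewrite compBr hab subrr.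
Qed.

Lemma iso_idm (X : obj C) : is_iso (idm X).
Proof. by exists (idm X); rewrite comp1m. Qed.

Lemma monic_split_iso (X Y : obj C) (h : cHom C X Y) (k : cHom C Y X) :
  monic h -> h \o' k = idm Y -> is_iso k.
Proof.
move=> hm hk; exists h; split=> //.
by apply: hm; rewrite compA hk comp1m compm1.
Qed.

Lemma kernel_monic (K L M : obj C) (i : cHom C K L) (p : cHom C L M) : is_kernel i p -> monic i.
Proof.
move=> [hpi hu] X a b hab.
have h0 : p \o' (i \o' a) = 0 by rewrite compA hpi comp0m.
have [h [_ hun]] := hu X _ h0.
by rewrite -(hun a erefl) -(hun b (esym hab)).
Qed.

Lemma cokernel_epic (K L M : obj C) (i : cHom C K L) (p : cHom C L M) : is_cokernel i p -> epic p.
Proof.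
move=> [hpi hu] X a b hab.
have h0 : (a \o' p) \o' i = 0 by rewrite -compA hpi compm0.
have [h [_ hun]] := hu X _ h0.
by rewrite -(hun a erefl) -(hun b (esym hab)).
Qed.

Lemma kernel_iso (K L M : obj C) (i : cHom C K L) (p : cHom C L M) (K' : obj C) (i' : cHom C K' L) :
  is_kernel i p -> is_kernel i' p -> exists a, is_iso a /\ i \o' a = i'.
Proof.
move=> hk hk'.
have [a [ha _]] := hk.2 _ i' hk'.1.
have [a' [ha' _]] := hk'.2 _ i hk.1.
exists a; split=> //; exists a'; split.
- by apply: (kernel_monic hk'); rewrite compA ha' ha compm1.
- by apply: (kernel_monic hk); rewrite compA ha ha' compm1.
Qed.

Lemma cokernel_iso (K L M : obj C) (i : cHom C K L) (p : cHom C L M) (M' : obj C) (p' : cHom C L M') :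
  is_cokernel i p -> is_cokernel i p' -> exists c, is_iso c /\ c \o' p' = p.
Proof.
move=> hc hc'.
have [c [hcp _]] := hc'.2 _ p hc.1.
have [c' [hcp' _]] := hc.2 _ p' hc'.1.
exists c; split=> //; exists c'; split.
- by apply: (cokernel_epic hc'); rewrite -compA hcp hcp' comp1m.
- by apply: (cokernel_epic hc); rewrite -compA hcp' hcp comp1m.
Qed.

Lemma kernel_retraction_of_section (K L M : obj C) (i : cHom C K L) (p : cHom C L M)
    (s : cHom C M L) :
  is_kernel i p -> p \o' s = idm M -> exists r, r \o' i = idm K.
Proof.
move=> hk hs.
have h0 : p \o' (idm L - (s \o' p)) = 0 by rewrite compBr compm1 compA hs comp1m subrr.
have [r [hr _]] := hk.2 _ _ h0.
exists r; apply: (kernel_monic hk).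
by rewrite compA hr compBl comp1m -compA hk.1 compm0 subr0 compm1.
Qed.

Lemma cokernel_section_of_retraction (K L M : obj C) (i : cHom C K L) (p : cHom C L M)
    (r : cHom C L K) :
  is_cokernel i p -> r \o' i = idm K -> exists s, p \o' s = idm M.
Proof.
move=> hc hr.
have h0 : (idm L - (i \o' r)) \o' i = 0 by rewrite compBl comp1m -compA hr compm1 subrr.
have [s [hs _]] := hc.2 _ _ h0.
exists s; apply: (cokernel_epic hc).
by rewrite -compA hs compBr compm1 compA hc.1 comp0m subr0 comp1m.
Qed.

Lemma product_ext (I : Type) (F : I -> obj C) (P : obj C)
    (pr : forall j, cHom C P (F j)) :
  is_product pr -> forall X (h1 h2 : cHom C X P),
  (forall j, pr j \o' h1 = pr j \o' h2) -> h1 = h2.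
Proof.
move=> hP X h1 h2 he.
have [h [_ hun]] := hP X (fun j => pr j \o' h1).
by rewrite -(hun h1 (fun j => erefl)) -(hun h2 (fun j => esym (he j))).
Qed.

Lemma product_kernel (I : Type) (K L M : I -> obj C)
    (i : forall j, cHom C (K j) (L j)) (p : forall j, cHom C (L j) (M j))
    (PK PL PM : obj C) (prK : forall j, cHom C PK (K j))
    (prL : forall j, cHom C PL (L j)) (prM : forall j, cHom C PM (M j))
    (f : cHom C PK PL) (g : cHom C PL PM) :
  is_product prK -> is_product prL -> is_product prM ->
  (forall j, is_kernel (i j) (p j)) ->
  (forall j, prL j \o' f = i j \o' prK j) ->
  (forall j, prM j \o' g = p j \o' prL j) ->
  is_kernel f g.
Proof.
move=> hPK hPL hPM hk hf hg; split.
  apply: (product_ext hPM) => j.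
  by rewrite compA hg -compA hf compA (hk j).1 comp0m compm0.
move=> X h hh.
have [t_ ht_] : exists t_ : forall j, cHom C X (K j),
    forall j, i j \o' t_ j = prL j \o' h.
  apply: (non_dep_dep_functional_choice ClassicalEpsilon.choice
           (fun j => cHom C X (K j)) (fun j t => i j \o' t = prL j \o' h)) => j.
  have h0 : p j \o' (prL j \o' h) = 0 by rewrite compA -hg -compA hh compm0.
  by have [t [ht _]] := (hk j).2 X _ h0; exists t.
have [t [ht _]] := hPK X t_.
have hft : f \o' t = h.
  by apply: (product_ext hPL) => j; rewrite compA hf -compA ht ht_.
exists t; split=> // t' ht'.
apply: (product_ext hPK) => j; apply: (kernel_monic (hk j)).
by rewrite !compA -!hf -!compA ht' hft.
Qed.

Lemma pushout_ext (A B A' B' : obj C) (i : cHom C A B) (f : cHom C A A')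
    (f' : cHom C B B') (i' : cHom C A' B') :
  is_pushout i f f' i' -> forall X (w1 w2 : cHom C B' X),
  w1 \o' f' = w2 \o' f' -> w1 \o' i' = w2 \o' i' -> w1 = w2.
Proof.
move=> [hsq hu] X w1 w2 h1 h2.
have hc : (w2 \o' f') \o' i = (w2 \o' i') \o' f by rewrite -!compA hsq.
have [w [_ hw]] := hu X _ _ hc.
by rewrite -(hw w1 (conj h1 h2)) (hw w2 (conj erefl erefl)).
Qed.

Lemma pullback_ext (A B A' B' : obj C) (p : cHom C B A) (f : cHom C A' A)
    (f' : cHom C B' B) (p' : cHom C B' A') :
  is_pullback p f f' p' -> forall X (w1 w2 : cHom C X B'),
  f' \o' w1 = f' \o' w2 -> p' \o' w1 = p' \o' w2 -> w1 = w2.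
Proof.
move=> [hsq hu] X w1 w2 h1 h2.
have hc : p \o' (f' \o' w2) = f \o' (p' \o' w2) by rewrite !compA hsq.
have [w [_ hw]] := hu X _ _ hc.
by rewrite -(hw w1 (conj h1 h2)) (hw w2 (conj erefl erefl)).
Qed.

Lemma pushout_cokernel (D A PK P M : obj C) (d : cHom C D A) (q : cHom C A M)
    (j : cHom C D PK) (f' : cHom C A P) (i' : cHom C PK P) (p' : cHom C P M) :
  is_cokernel d q -> is_pushout d j f' i' ->
  p' \o' f' = q -> p' \o' i' = 0 -> is_cokernel i' p'.
Proof.
move=> [hqd hqu] hpo hp'f hp'i; split=> // X h hh.
have h0 : (h \o' f') \o' d = 0 by rewrite -compA hpo.1 compA hh comp0m.
have [t [ht htu]] := hqu X _ h0.
exists t; split.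
- apply: (pushout_ext hpo); first by rewrite -compA hp'f ht.
  by rewrite -compA hp'i compm0 hh.
- by move=> t' ht'; apply: htu; rewrite -ht' -compA hp'f.
Qed.

Lemma pullback_kernel (K L M A B : obj C) (i : cHom C K L) (p : cHom C L M)
    (u : cHom C A M) (f' : cHom C B L) (p' : cHom C B A) (i' : cHom C K B) :
  is_kernel i p -> is_pullback p u f' p' ->
  f' \o' i' = i -> p' \o' i' = 0 -> is_kernel i' p'.
Proof.
move=> [hpi hpu] hpb hf'i hp'i; split=> // X h hh.
have h0 : p \o' (f' \o' h) = 0 by rewrite compA hpb.1 -compA hh compm0.
have [t [ht htu]] := hpu X _ h0.
exists t; split.
- apply: (pullback_ext hpb); first by rewrite compA hf'i ht.
  by rewrite compA hp'i comp0m hh.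
- by move=> t' ht'; apply: htu; rewrite -ht' compA hf'i.
Qed.

Lemma kernel_comparison_monic (K L M P : obj C) (i' : cHom C K P)
    (p' : cHom C P M) (f : cHom C K L) (g : cHom C L M) (phi : cHom C P L) :
  is_kernel i' p' -> monic f -> phi \o' i' = f -> g \o' phi = p' -> monic phi.
Proof.
move=> [_ hku] hf hphii hgphi; apply: monicP => X x hx.
have hpx : p' \o' x = 0 by rewrite -hgphi -compA hx compm0.
have [y [hy _]] := hku X _ hpx.
have hfy : f \o' y = f \o' 0 by rewrite compm0 -hphii -compA hy hx.
by rewrite -hy (hf _ _ _ hfy) compm0.
Qed.

End AdditiveCategory.

Section ExactCategory.
Variable E : ExactCat.

Lemma conf_replace_kernel (K K' L M : obj E) (i : cHom E K L) (i' : cHom E K' L)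
    (p : cHom E L M) :
  conf i p -> is_kernel i' p -> conf i' p.
Proof.
move=> hc hk'; have [a [ha hia]] := kernel_iso (conf_kc hc).1 hk'.
apply: (conf_iso (a := a) (b := idm L) (c := idm M) hc ha (iso_idm _) (iso_idm _)).
- by rewrite comp1m.
- by rewrite comp1m compm1.
Qed.

Lemma conf_replace_cokernel (K L M M' : obj E) (i : cHom E K L) (p : cHom E L M)
    (p' : cHom E L M') :
  conf i p -> is_cokernel i p' -> conf i p'.
Proof.
move=> hc hc'; have [c [hc_iso hcp]] := cokernel_iso (conf_kc hc).2 hc'.
apply: (conf_iso (a := idm K) (b := idm L) (c := c) hc (iso_idm _) (iso_idm _) hc_iso).
- by rewrite comp1m compm1.
- by rewrite hcp compm1.
Qed.

Lemma conf_pushout_cokernel (D A M PK : obj E) (d : cHom E D A) (q : cHom E A M) :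
  conf d q -> forall j : cHom E D PK,
  exists P (f' : cHom E A P) (i' : cHom E PK P) (p' : cHom E P M),
    is_pushout d j f' i' /\ conf i' p' /\ p' \o' f' = q.
Proof.
move=> hc j.
have [P [f' [i' [hpo [M' [p'' hc'']]]]]] :=
  conf_pushout j (ex_intro _ M (ex_intro _ q hc)).
have [_ hcok] := conf_kc hc.
have h0 : q \o' d = 0 \o' j by rewrite hcok.1 comp0m.
have [p' [[hp'f hp'i] _]] := hpo.2 M q 0 h0.
exists P, f', i', p'; do 2!split=> //.
exact: conf_replace_cokernel hc'' (pushout_cokernel hcok hpo hp'f hp'i).
Qed.

Definition ext_splits (K A : obj E) (e : extension K A) : Prop :=
  exists s : cHom E A (ext_obj e), ext_p e \o' s = idm A.

Lemma ext_mor_splits (K A : obj E) (e1 e2 : extension K A) :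
  ext_mor e1 e2 -> (ext_splits e1 <-> ext_splits e2).
Proof.
case: e1 e2 => [X1 i1 p1] [X2 i2 p2] [hc1 [hc2 [phi [hphi hp]]]].
rewrite /ext_splits /=; split.
- by move=> [s hs]; exists (phi \o' s); rewrite compA hp.
- move=> [s hs]; have [r hr] := kernel_retraction_of_section (conf_kc hc2).1 hs.
  apply: (cokernel_section_of_retraction (r := r \o' phi) (conf_kc hc1).2).
  by rewrite -compA hphi.
Qed.

Lemma yoneda_equiv_splits (K A : obj E) (e1 e2 : extension K A) :
  yoneda_equiv e1 e2 -> (ext_splits e1 <-> ext_splits e2).
Proof.
elim=> [x y /ext_mor_splits //|x //|x y _ h|x y z _ h1 _ h2].
- by split=> /h.
- by split=> [/h1/h2|/h2/h1].
Qed.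

Lemma Ext1_zero_lift (K L M A : obj E) (i : cHom E K L) (p : cHom E L M) :
  conf i p -> Ext1_zero A K -> forall u : cHom E A M, exists s, p \o' s = u.
Proof.
move=> hc hA u.
have [B [f' [p' [hpb [K' [i'' hc'']]]]]] :=
  conf_pullback u (ex_intro _ K (ex_intro _ i hc)).
have [hk _] := conf_kc hc.
have h0 : p \o' i = u \o' 0 by rewrite hk.1 compm0.
have [i' [[hf'i hp'i] _]] := hpb.2 K i 0 h0.
have hc' : conf i' p' := conf_replace_kernel hc'' (pullback_kernel hk hpb hf'i hp'i).
have [t ht] : ext_splits (Ext i' p').
  apply/(yoneda_equiv_splits (hA (Ext i' p') hc')).
  by exists (bi_inr K A); apply: bi_pr2_inr.
by exists (f' \o' t); rewrite compA hpb.1 -compA ht compm1.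
Qed.

(* The right inverse is built on the pullback of [g \o' s] along [g], whose
   projection to [L] is an admissible epimorphism. *)
Lemma split_monic_factoring (K L M A P : obj E) (f : cHom E K L)
    (g : cHom E L M) (s : cHom E A L) (phi : cHom E P L) (f' : cHom E A P)
    (i' : cHom E K P) :
  is_kernel f g -> adm_epi (g \o' s) -> monic phi ->
  phi \o' f' = s -> phi \o' i' = f -> exists psi, phi \o' psi = idm L.
Proof.
move=> [_ hfu] hq hphi hphif hphii.
have [Q [pi2 [pi1 [[hsq _] [N [n hn]]]]]] := conf_pullback g hq.
have hy0 : g \o' (pi1 - (s \o' pi2)) = 0 by rewrite compBr compA hsq subrr.
have [y [hy _]] := hfu Q _ hy0.
pose psi' := (f' \o' pi2) + (i' \o' y).
have hphipsi' : phi \o' psi' = pi1.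
  by rewrite compDr !compA hphif hphii hy addrC subrK.
have hcok := (conf_kc hn).2.
have hpsi'n : psi' \o' n = 0.
  by apply: hphi; rewrite compA hphipsi' hcok.1 compm0.
have [psi [hpsi _]] := hcok.2 P psi' hpsi'n.
exists psi; apply: (cokernel_epic hcok).
by rewrite -compA hpsi hphipsi' comp1m.
Qed.

Lemma conf_of_kernel_adm_epi_comp (K L M A : obj E) (f : cHom E K L)
    (g : cHom E L M) (s : cHom E A L) :
  is_kernel f g -> adm_epi (g \o' s) -> conf f g.
Proof.
move=> hk hq; have [D [d hd]] := hq.
have hgsd : g \o' (s \o' d) = 0 by rewrite compA (conf_kc hd).2.1.
have [j [hj _]] := hk.2 D _ hgsd.
have [P [f' [i' [p' [hpo [hc hp'f]]]]]] := conf_pushout_cokernel hd j.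
have [phi [[hphif hphii] _]] := hpo.2 L s f (esym hj).
have hgphi : g \o' phi = p'.
  apply: (pushout_ext hpo); first by rewrite -compA hphif hp'f.
  by rewrite -compA hphii hk.1 (conf_kc hc).1.1.
have hphi := kernel_comparison_monic (conf_kc hc).1 (kernel_monic hk) hphii hgphi.
have [psi hpsi] := split_monic_factoring hk hq hphi hphif hphii.
apply: (conf_iso (a := idm K) (b := psi) (c := idm M) hc (iso_idm _)
          (monic_split_iso hphi hpsi) (iso_idm _)).
- by apply: hphi; rewrite compm1 compA hpsi comp1m hphii.
- by rewrite comp1m -hgphi -compA hpsi compm1.
Qed.

End ExactCategory.

Theorem lemma8p3 (E : ExactCat) (I : Type) (K L M : I -> obj E)
  (i : forall j, cHom E (K j) (L j)) (p : forall j, cHom E (L j) (M j))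
  (hconf : forall j, conf (i j) (p j))
  (PK PL PM : obj E)
  (prK : forall j, cHom E PK (K j)) (prL : forall j, cHom E PL (L j))
  (prM : forall j, cHom E PM (M j))
  (hPK : is_product prK) (hPL : is_product prL) (hPM : is_product prM)
  (A : obj E) (q : cHom E A PM) (hq : adm_epi q)
  (hA : forall j, Ext1_zero A (K j))
  (f : cHom E PK PL) (hf : forall j, prL j \o' f = i j \o' prK j)
  (g : cHom E PL PM) (hg : forall j, prM j \o' g = p j \o' prL j) :
  conf f g.
Proof.
have [s_ hs_] : exists s_ : forall j, cHom E A (L j),
    forall j, p j \o' s_ j = prM j \o' q.
  apply: (non_dep_dep_functional_choice ClassicalEpsilon.choice
           (fun j => cHom E A (L j)) (fun j t => p j \o' t = prM j \o' q)) => j.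
  exact: Ext1_zero_lift (hconf j) (hA j) _.
have [s [hs _]] := hPL A s_.
have hgs : g \o' s = q.
  by apply: (product_ext hPM) => j; rewrite compA hg -compA hs hs_.
apply: (conf_of_kernel_adm_epi_comp (s := s)); last by rewrite hgs.
exact: product_kernel hPK hPL hPM (fun j => (conf_kc (hconf j)).1) hf hg.
Qed.
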